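(* Let $(L,\vee,\wedge,0,1)$ be a complemented lattice with $0\ne1$ and consider the statements: (i) $x^+\vee y^+\le_1(x\wedge y)^+$ for all $x,y\in L$; (ii) for all $x,y\in L$, $x\le y$ implies $y^+\le_1x^+$; (iii) $(x\vee y)^+\le_1x^+\wedge y^+$ for all $x,y\in L$. Then (i) implies (ii), and (ii) is equivalent to (iii).
   Context: For $a\in L$, $a^+:=\{x\in L\mid a\vee x=1,\ a\wedge x=0\}$ (the set of all complements of $a$). For $A,B\subseteq L$: $A\vee B:=\{x\vee y\mid x\in A,y\in B\}$, $A\wedge B:=\{x\wedge y\mid x\in A,y\in B\}$, and $A\le_1B$ means that for every $x\in A$ there exists $y\in B$ with $x\le y$. *)

From HB Require Import structures.
From mathcomp Require Import all_boot all_order.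
Set Implicit Arguments. Unset Strict Implicit. Unset Printing Implicit Defensive.
Import Order.TTheory.
Local Open Scope order_scope.

Definition compls {d} {L : tbLatticeType d} (a : L) : L -> Prop :=
  fun x => a `|` x = \top /\ a `&` x = \bot.

Definition complemented {d} (L : tbLatticeType d) : Prop :=
  forall a : L, exists x, compls a x.

Definition setJoin {d} {L : tbLatticeType d} (A B : L -> Prop) : L -> Prop :=
  fun z => exists x y, A x /\ B y /\ z = x `|` y.

Definition setMeet {d} {L : tbLatticeType d} (A B : L -> Prop) : L -> Prop :=
  fun z => exists x y, A x /\ B y /\ z = x `&` y.

Definition le1 {d} {L : tbLatticeType d} (A B : L -> Prop) : Prop :=
  forall x, A x -> exists y, B y /\ x <= y.

From HB Require Import structures.
From mathcomp Require Import all_boot all_order.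
Import Order.TTheory.
Local Open Scope order_scope.

(* For x <= y we have x /\ y = x and x \/ y = y, so (i) and (iii) specialise to
   statements about x^+ and y^+ alone.  In (i), any complement z of y is
   dominated by c \/ z for a complement c of x, which lies in x^+ \/ y^+; in
   (iii), z lies below a /\ b <= a with a in x^+.  Conversely (ii) applied to
   x, y <= x \/ y gives a in x^+ and b in y^+ above z, hence z <= a /\ b.
   Neither direction uses 0 <> 1. *)

Section ComplementSets.

Context {d : Order.disp_t} {L : tbLatticeType d}.

Definition compls_joinI_le1 : Prop :=
  forall x y : L, le1 (setJoin (compls x) (compls y)) (compls (x `&` y)).

Definition compls_antitone_le1 : Prop :=
  forall x y : L, x <= y -> le1 (compls y) (compls x).

Definition compls_joinU_le1 : Prop :=
  forall x y : L, le1 (compls (x `|` y)) (setMeet (compls x) (compls y)).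

Lemma compls_antitone_of_joinI :
  complemented L -> compls_joinI_le1 -> compls_antitone_le1.
Proof.
move=> Lcompl h1 x y /meet_idPl xy z zy.
have [c cx] := Lcompl x.
have cz_in : setJoin (compls x) (compls y) (c `|` z) by exists c, z.
have [w [wx czw]] := h1 x y _ cz_in.
rewrite xy in wx.
by exists w; split; last exact: le_trans (leUr z c) czw.
Qed.

Lemma compls_joinU_of_antitone : compls_antitone_le1 -> compls_joinU_le1.
Proof.
move=> h2 x y z zxy.
have [a [xa za]] := h2 x (x `|` y) (leUl x y) z zxy.
have [b [yb zb]] := h2 y (x `|` y) (leUr y x) z zxy.
exists (a `&` b); split; first by exists a, b.
by rewrite lexI za zb.
Qed.

Lemma compls_antitone_of_joinU : compls_joinU_le1 -> compls_antitone_le1.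
Proof.
move=> h3 x y /join_idPr xy z zy.
rewrite -xy in zy.
have [_ [[a [b [ax [_ ->]]]] zab]] := h3 x y z zy.
by exists a; split; last exact: le_trans zab (leIl a b).
Qed.

End ComplementSets.

Theorem proposition3 (d : Order.disp_t) (L : tbLatticeType d)
  (Hcompl : complemented L) (H01 : (\bot : L) <> \top) :
  let P1 := forall x y : L, le1 (setJoin (compls x) (compls y)) (compls (x `&` y)) in
  let P2 := forall x y : L, x <= y -> le1 (compls y) (compls x) in
  let P3 := forall x y : L, le1 (compls (x `|` y)) (setMeet (compls x) (compls y)) in
  (P1 -> P2) /\ (P2 <-> P3).
Proof.
split; first exact: compls_antitone_of_joinI.
split; [exact: compls_joinU_of_antitone | exact: compls_antitone_of_joinU].
Qed.
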